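(* Let $n\ge 3$, let $c^1,\dots,c^n$ be pairwise distinct constants, and let $u(x^1,\dots,x^n)$ be smooth with all first derivatives $u_i$ nowhere zero. Suppose that for all pairwise distinct $i,j,k$, $$(c^i-c^j)u_ku_{ij}+(c^k-c^i)u_ju_{ik}+(c^j-c^k)u_iu_{jk}=0\quad\text{and}\quad u_{ijk}=\tfrac12\Big(\frac{u_{ij}u_{ik}}{u_i}+\frac{u_{ij}u_{jk}}{u_j}+\frac{u_{ik}u_{jk}}{u_k}\Big).$$ Then for all $i\ne j$ the planar equation $$\Big(\frac{u_{ij}^2}{u_i^2u_j}\Big)_i+\Big(\frac{u_{ij}^2}{u_iu_j^2}\Big)_j+\Big(\frac{2u_{ij}}{u_iu_j}\Big)_{ij}=0$$ holds, where outer subscripts denote partial derivatives with respect to $x^i$, $x^j$.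
   Context: Subscripts on $u$ denote partial derivatives with respect to the independent variables, e.g. $u_{ij}=\partial^2u/\partial x^i\partial x^j$. The planar equation is the first group of multiform Euler-Lagrange equations of the Lagrangian 2-form $\mathcal{L}=\sum_{i<j}(c^i-c^j)\frac{u_{ij}^2}{u_iu_j}\,\mathrm{d}x^i\wedge\mathrm{d}x^j$. *)

From HB Require Import structures.
From mathcomp Require Import all_boot all_order all_algebra.
From mathcomp Require Import all_classical all_reals all_analysis.
Set Implicit Arguments. Unset Strict Implicit. Unset Printing Implicit Defensive.
Import Order.TTheory GRing.Theory Num.Theory.
Import numFieldNormedType.Exports.
Local Open Scope ring_scope.

Definition ebasis {R : realType} {n : nat} (i : 'I_n) : 'rV[R]_n :=
  delta_mx 0 i.

Definition pd {R : realType} {n : nat} (i : 'I_n) (f : 'rV[R]_n -> R)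
  : 'rV[R]_n -> R := fun x => 'D_(ebasis i) f x.

Fixpoint pds {R : realType} {n : nat} (s : seq 'I_n) (f : 'rV[R]_n -> R)
  : 'rV[R]_n -> R :=
  match s with
  | [::] => f
  | i :: s' => pd i (pds s' f)
  end.

Definition smooth {R : realType} {n : nat} (f : 'rV[R]_n -> R) : Prop :=
  forall (s : seq 'I_n) (x : 'rV[R]_n), differentiable (pds s f) x.

From HB Require Import structures.
From mathcomp Require Import all_boot all_order all_algebra.
From mathcomp Require Import all_classical all_reals all_analysis.
From mathcomp Require Import ring.
Import Order.TTheory GRing.Theory Num.Theory.
Import numFieldNormedType.Exports.
Local Open Scope ring_scope.
Set Implicit Arguments. Unset Strict Implicit. Unset Printing Implicit Defensive.

(* Fix a third index k distinct from i and j.  Differentiating the linear relation in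
   x^i, in x^j and in both lets one solve for u_iik, u_jjk and u_iijj (their coefficients
   (c^k-c^i)u_j, (c^j-c^k)u_i and (c^i-c^j)u_k are nonzero), while the quadratic relation
   and its x^i- and x^j-derivatives give u_ijk, u_iijk and u_ijjk.  The planar expression
   equals 2/(u_i u_j) times
     u_iijj - b u_iij - a u_ijj + a b u_ij - u_ij^3/(u_i u_j),
   with a = d_i log(u_i u_j) and b = d_j log(u_i u_j), and after these substitutions this
   vanishes identically.  Smoothness is used through the symmetry of mixed partials. *)

Section MixedPartials.
Variables (R : realType) (V : normedModType R).
Implicit Types (f : V -> R) (x e : V).

Lemma is_derive_line f x e t : derivable f (x + t *: e) e ->
  is_derive t (1 : R) (fun s : R => f (x + s *: e)) ('D_e f (x + t *: e)).
Proof.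
move=> df.
have quotE : (fun h : R => h^-1 *: (((fun s => f (x + s *: e)) \o shift t) (h *: 1)
                                    - f (x + t *: e)))
           = (fun h : R => h^-1 *: ((f \o shift (x + t *: e)) (h *: e) - f (x + t *: e))).
  apply/funext => h /=; congr (_ *: (f _ - _)).
  by rewrite /shift scaler1 scalerDl addrCA addrA.
by split; rewrite /derivable /derive quotE.
Qed.

Lemma MVT_from0 (F dF : R -> R) (h : R) : 0 < h ->
  (forall s : R, is_derive s (1 : R) F (dF s)) ->
  exists2 s, s \in `]0, h[ & F h - F 0 = dF s * h.
Proof.
move=> h0 dF_F; have [|s sI ->] := MVT h0 (fun s _ => dF_F s); last first.
  by exists s; rewrite // subr0.
apply: continuous_subspaceT => s; apply: differentiable_continuous.
by apply/derivable1_diffP; case: (dF_F s).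
Qed.

(* Two applications of the mean value theorem, first along [ea], then along [eb]. *)
Lemma second_difference_MVT f x ea eb h : 0 < h ->
  (forall y, differentiable f y) -> (forall y, differentiable ('D_ea f) y) ->
  exists s t, [/\ s \in `]0, h[, t \in `]0, h[ &
    f (x + h *: eb + h *: ea) - f (x + h *: ea) - f (x + h *: eb) + f x
    = h * h * 'D_eb ('D_ea f) (x + s *: ea + t *: eb)].
Proof.
move=> h0 df dDf.
have [s sI Es] : exists2 s, s \in `]0, h[ &
    (f (x + h *: eb + h *: ea) - f (x + h *: ea)) - (f (x + h *: eb) - f x)
    = ('D_ea f (x + h *: eb + s *: ea) - 'D_ea f (x + s *: ea)) * h.
  have := @MVT_from0 (fun s => f (x + h *: eb + s *: ea) - f (x + s *: ea)) _ h h0.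
  rewrite !scale0r !addr0; apply=> s.
  by apply: is_deriveB; apply: is_derive_line; apply: diff_derivable.
have [t tI Et] : exists2 t, t \in `]0, h[ &
    'D_ea f (x + s *: ea + h *: eb) - 'D_ea f (x + s *: ea)
    = 'D_eb ('D_ea f) (x + s *: ea + t *: eb) * h.
  have := @MVT_from0 (fun t => 'D_ea f (x + s *: ea + t *: eb)) _ h h0.
  rewrite scale0r addr0; apply=> t.
  by apply: is_derive_line; apply: diff_derivable.
exists s, t; split => //.
transitivity ((f (x + h *: eb + h *: ea) - f (x + h *: ea)) - (f (x + h *: eb) - f x)).
  by ring.
by rewrite Es [x + h *: eb + _]addrAC Et -mulrA mulrC.
Qed.

Lemma ball_shift2 x (a b : V) (h s t : R) : s \in `]0, h[ -> t \in `]0, h[ ->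
  ball x (h * (`|a| + `|b| + 1)) (x + s *: a + t *: b).
Proof.
rewrite !in_itv /= -ball_normE /ball_ /= => /andP[s0 sh] /andP[t0 th].
rewrite -addrA opprD addNKr normrN (le_lt_trans (ler_normD _ _)) //.
rewrite !normrZ !gtr0_norm // !mulrDr mulr1.
apply: (@le_lt_trans _ _ (h * `|a| + h * `|b|)).
  by rewrite lerD // ler_wpM2r // ltW.
by rewrite ltrDl (lt_trans s0).
Qed.

(* Schwarz: by [second_difference_MVT], both mixed derivatives take the same value at
   points arbitrarily close to x. *)
Lemma derive_comm f ea eb x :
  (forall y, differentiable f y) ->
  (forall y, differentiable ('D_ea f) y) -> (forall y, differentiable ('D_eb f) y) ->
  {for x, continuous ('D_eb ('D_ea f))} -> {for x, continuous ('D_ea ('D_eb f))} ->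
  'D_eb ('D_ea f) x = 'D_ea ('D_eb f) x.
Proof.
move=> df dfa dfb cFab cFba.
set F := 'D_eb ('D_ea f); set G := 'D_ea ('D_eb f).
apply/eqP; rewrite -subr_eq0 -normr_le0; apply/ler_addgt0Pr => e e0.
have e20 : 0 < e / 2 by rewrite divr_gt0.
have near_F : \forall y \near x, `|F x - F y| < e / 2 := (cvgrPdist_lt _ _).1 cFab _ e20.
have near_G : \forall y \near x, `|G x - G y| < e / 2 := (cvgrPdist_lt _ _).1 cFba _ e20.
have nbhs_x : Filter (nbhs x) by exact: _.
have [d /= d0 near_x] := (nbhs_ballP x _).1 (filterI (near_F nbhs_x) (near_G nbhs_x)).
have M0 : 0 < `|ea| + `|eb| + 1 by rewrite ltr_pwDr // addr_ge0.
set h := d / (`|ea| + `|eb| + 1).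
have h0 : 0 < h by rewrite divr_gt0.
have hM : h * (`|ea| + `|eb| + 1) = d by rewrite divfK ?gt_eqF.
have [s [t [sI tI Eab]]] := second_difference_MVT x eb h0 df dfa.
have [s' [t' [sI' tI' Eba]]] := second_difference_MVT x ea h0 df dfb.
have FG : F (x + s *: ea + t *: eb) = G (x + s' *: eb + t' *: ea).
  have hh : h * h != 0 by rewrite mulf_neq0 // gt_eqF.
  apply: (mulfI hh); rewrite /F /G -Eab -Eba [x + _ *: ea + _ *: eb]addrAC.
  by rewrite [_ - f (x + _ *: ea) - _]addrAC.
have Bab : ball x d (x + s *: ea + t *: eb) by rewrite -hM; apply: ball_shift2.
have Bba : ball x d (x + s' *: eb + t' *: ea).
  by rewrite -hM [`|ea| + _]addrC; apply: ball_shift2.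
have [closeF _] := near_x _ Bab.
have [_ closeG] := near_x _ Bba.
have -> : F x - G x
    = (F x - F (x + s *: ea + t *: eb)) - (G x - G (x + s' *: eb + t' *: ea)).
  by rewrite FG opprB addrA subrK.
rewrite add0r; apply: le_trans (ler_normB _ _) _.
by apply: ltW; rewrite [e in _ < e]splitr; exact: ltrD closeF closeG.
Qed.

End MixedPartials.

Section PointwiseRules.
Variables (R : realType) (V : normedModType R).
Implicit Types (f g : V -> R) (x v : V).

Lemma is_derive_add f g x v df dg : is_derive x v f df -> is_derive x v g dg ->
  is_derive x v (fun y => f y + g y) (df + dg).
Proof. exact: is_deriveD. Qed.

Lemma is_derive_opp f x v df : is_derive x v f df ->
  is_derive x v (fun y => - f y) (- df).
Proof. exact: is_deriveN. Qed.

Lemma is_derive_mul f g x v df dg : is_derive x v f df -> is_derive x v g dg ->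
  is_derive x v (fun y => f y * g y) (df * g x + f x * dg).
Proof.
by move=> dfx dgx; apply: is_derive_eq (is_deriveM dfx dgx) _; rewrite addrC mulrC.
Qed.

Lemma is_derive_sqr f x v df : is_derive x v f df ->
  is_derive x v (fun y => f y ^+ 2) (2 * f x * df).
Proof.
move=> dfx; rewrite (_ : (fun y => f y ^+ 2) = (fun y => f y * f y)).
  by apply: is_derive_eq (is_derive_mul dfx dfx) _; ring.
by apply/funext => y; rewrite expr2.
Qed.

Lemma is_derive_inv f x v df : f x != 0 -> is_derive x v f df ->
  is_derive x v (fun y => (f y)^-1) (- df / f x ^+ 2).
Proof.
move=> fx0 [dfx dfE]; split; first exact: derivableV.
rewrite deriveV // dfE; change (- f x ^- 2 * df = - df / f x ^+ 2).
by rewrite mulNr mulNr mulrC.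
Qed.

End PointwiseRules.

Section PartialDerivatives.
Variables (R : realType) (n : nat).
Implicit Types (f g : 'rV[R]_n -> R) (x : 'rV[R]_n) (a b : 'I_n) (s : seq 'I_n).

Lemma pdE f a x df : is_derive x (ebasis a) f df -> pd a f x = df.
Proof. by case. Qed.

Lemma is_derive_eqfun f g a x df dg : f =1 g ->
  is_derive x (ebasis a) f df -> is_derive x (ebasis a) g dg -> df = dg.
Proof. by move=> /funext -> /pdE <- /pdE <-. Qed.

Lemma pds_cat s t f : pds s (pds t f) = pds (s ++ t) f.
Proof. by elim: s => //= a s ->. Qed.

Lemma smooth_pds f s : smooth f -> smooth (pds s f).
Proof. by move=> sf t x; rewrite pds_cat. Qed.

Lemma is_derive_pds f s a x : smooth f ->
  is_derive x (ebasis a) (pds s f) (pds (a :: s) f x).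
Proof. by move=> sf; apply/derivableP/diff_derivable. Qed.

Lemma pdC f a b : smooth f -> pd a (pd b f) = pd b (pd a f).
Proof.
move=> sf; apply/funext => x; apply: (derive_comm (sf [::])) => //.
- exact: (sf [:: b]).
- exact: (sf [:: a]).
- exact/differentiable_continuous/(sf [:: a; b]).
- exact/differentiable_continuous/(sf [:: b; a]).
Qed.

Lemma pdsC f a b s : smooth f -> pds (a :: b :: s) f = pds (b :: a :: s) f.
Proof. by move=> sf; apply: pdC; apply: smooth_pds. Qed.

End PartialDerivatives.

Lemma lin_solve (F : fieldType) (a b X : F) : a != 0 -> b + a * X = 0 -> X = - b / a.
Proof. by move=> a0 /eqP; rewrite addrC addr_eq0 => /eqP <-; rewrite mulrC mulKf. Qed.

Lemma planar_identity (F : numFieldType) (ci cj ck ui uj uk uii ujj uij uik ujk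
    uiij uijj uiik ujjk uijk uiijk uijjk uiijj : F) :
  ui != 0 -> uj != 0 -> uk != 0 -> ci != cj -> cj != ck -> ck != ci ->
  (ci - cj) * uk * uij + (ck - ci) * uj * uik + (cj - ck) * ui * ujk = 0 ->
  uijk = 2^-1 * (uij * uik / ui + uij * ujk / uj + uik * ujk / uk) ->
  (ci - cj) * (uik * uij + uk * uiij) + (ck - ci) * uij * uik
    + (cj - ck) * (uii * ujk + ui * uijk) + (ck - ci) * uj * uiik = 0 ->
  (ci - cj) * (ujk * uij + uk * uijj) + (ck - ci) * (ujj * uik + uj * uijk)
    + (cj - ck) * uij * ujk + (cj - ck) * ui * ujjk = 0 ->
  (ci - cj) * (uijk * uij + ujk * uiij + uik * uijj)
    + (ck - ci) * (uijj * uik + ujj * uiik + uij * uijk + uj * uiijk)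
    + (cj - ck) * (uiij * ujk + uij * uijk)
    + (cj - ck) * (uii * ujjk + ui * uijjk) + (ci - cj) * uk * uiijj = 0 ->
  uiijk = 2^-1 * ((uiij * uik + uij * uiik) / ui - uij * uik * uii / ui ^+ 2
    + (uiij * ujk + uij * uijk) / uj - uij * ujk * uij / uj ^+ 2
    + (uiik * ujk + uik * uijk) / uk - uik * ujk * uik / uk ^+ 2) ->
  uijjk = 2^-1 * ((uijj * uik + uij * uijk) / ui - uij * uik * uij / ui ^+ 2
    + (uijj * ujk + uij * ujjk) / uj - uij * ujk * ujj / uj ^+ 2
    + (uijk * ujk + uik * ujjk) / uk - uik * ujk * ujk / uk ^+ 2) ->
  uiijj - uiij * (uij / ui + ujj / uj) - uijj * (uij / uj + uii / ui)
    + uij * (uij / ui + ujj / uj) * (uij / uj + uii / ui) = uij ^+ 3 / (ui * uj).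
Proof.
move=> ui0 uj0 uk0 ci_cj cj_ck ck_ci.
have [cij cjk cki] : [/\ ci - cj != 0, cj - ck != 0 & ck - ci != 0].
  by rewrite !subr_eq0.
move=> lin quad lin_i lin_j lin_ij quad_i quad_j.
rewrite (lin_solve (mulf_neq0 cij uk0) lin_ij) quad_i quad_j.
rewrite (lin_solve (mulf_neq0 cki uj0) lin_i) (lin_solve (mulf_neq0 cjk ui0) lin_j).
rewrite quad (lin_solve (mulf_neq0 cjk ui0) lin).
by field; rewrite ui0 uj0 uk0 cij cjk cki.
Qed.

Lemma exists_ord_neq2 n (i j : 'I_n) : (3 <= n)%N ->
  exists k : 'I_n, (k != i) && (k != j).
Proof.
move=> n3; have : (0 < #|~: [set i; j]|)%N.
  rewrite -(leq_add2l #|[set i; j]|) cardsC card_ord cards2 addn1.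
  by apply: leq_trans n3; case: (i != j).
by case/card_gt0P => k; rewrite !inE negb_or => kij; exists k.
Qed.

Section PlanarEquation.
Variables (R : realType) (n : nat) (u : 'rV[R]_n -> R) (i j : 'I_n).

Local Notation "u_( a , .. , b )" := (pds (cons a .. (cons b nil) ..) u).

Hypothesis u_smooth : smooth u.
Hypothesis u_neq0 : forall (l : 'I_n) (x : 'rV[R]_n), u_(l) x != 0.

Ltac nonzero := repeat first [apply: mulf_neq0 | apply: expf_neq0 | apply: u_neq0].

Ltac derive_rules := repeat lazymatch goal with
  | |- is_derive _ _ (fun _ => ?a) _ => apply: is_derive_cst
  | |- is_derive _ _ (fun y => pds _ u y) _ => apply: (is_derive_pds _ _ _ u_smooth)
  | |- is_derive _ _ (pds _ u) _ => apply: (is_derive_pds _ _ _ u_smooth)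
  | |- is_derive _ _ (fun y => _ + _) _ => apply: is_derive_add
  | |- is_derive _ _ (fun y => - _) _ => apply: is_derive_opp
  | |- is_derive _ _ (fun y => _ ^+ 2) _ => apply: is_derive_sqr
  | |- is_derive _ _ (fun y => _ * _) _ => apply: is_derive_mul
  | |- is_derive _ _ (fun y => _^-1) _ =>
      apply: is_derive_inv; first by nonzero
  end.

(* The partial derivatives are generalized to variables before calling [ring] or [field]:
   otherwise comparing two of them forces their unfolding into limits. *)
Ltac abstract_partials x :=
  cbv beta;
  repeat match goal with |- context [pds [:: ?l] u x] =>
    move: (u_neq0 l x); generalize (pds [:: l] u x) end;
  repeat match goal with |- context [pds ?s u x] => generalize (pds s u x) end;
  intros.

Ltac field_partials := field; do ?[apply/andP; split].

Ltac differentiate a x H :=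
  apply: (is_derive_eqfun (a := a) (x := x) H);
  (apply: is_derive_eq; [by derive_rules | ]);
  rewrite ?(pdsC j i _ u_smooth); abstract_partials x.

Lemma planar_lhsE x :
    pd i (fun y => u_(i, j) y ^+ 2 / (u_(i) y ^+ 2 * u_(j) y)) x
  + pd j (fun y => u_(i, j) y ^+ 2 / (u_(i) y * u_(j) y ^+ 2)) x
  + pds [:: i; j] (fun y => 2 * u_(i, j) y / (u_(i) y * u_(j) y)) x
  = 2 / (u_(i) x * u_(j) x) * (u_(i, i, j, j) x
      - u_(i, i, j) x * (u_(i, j) x / u_(i) x + u_(j, j) x / u_(j) x)
      - u_(i, j, j) x * (u_(i, j) x / u_(j) x + u_(i, i) x / u_(i) x)
      + u_(i, j) x * (u_(i, j) x / u_(i) x + u_(j, j) x / u_(j) x)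
                   * (u_(i, j) x / u_(j) x + u_(i, i) x / u_(i) x)
      - u_(i, j) x ^+ 3 / (u_(i) x * u_(j) x)).
Proof.
have dj : pd j (fun y => 2 * u_(i, j) y / (u_(i) y * u_(j) y)) = fun y =>
    2 * (u_(i, j, j) y * u_(i) y * u_(j) y
         - u_(i, j) y * (u_(i, j) y * u_(j) y + u_(i) y * u_(j, j) y))
      / (u_(i) y * u_(j) y) ^+ 2.
  apply/funext => y; apply: pdE; apply: is_derive_eq; first by derive_rules.
  by rewrite ?(pdsC j i _ u_smooth); abstract_partials y; field_partials.
rewrite -[pds [:: i; j] _ x]/(pd i (pd j _) x) dj.
do 3 erewrite pdE by derive_rules.
by rewrite ?(pdsC j i _ u_smooth); abstract_partials x; field_partials.
Qed.

Section ThirdIndex.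
Variables (c : 'I_n -> R) (k : 'I_n).

Hypothesis lin_rel : forall x, (c i - c j) * u_(k) x * u_(i, j) x
  + (c k - c i) * u_(j) x * u_(i, k) x + (c j - c k) * u_(i) x * u_(j, k) x = 0.
Hypothesis quad_rel : forall x, u_(i, j, k) x = 2^-1 * (u_(i, j) x * u_(i, k) x / u_(i) x
  + u_(i, j) x * u_(j, k) x / u_(j) x + u_(i, k) x * u_(j, k) x / u_(k) x).

Lemma lin_rel_di x : (c i - c j) * (u_(i, k) x * u_(i, j) x + u_(k) x * u_(i, i, j) x)
  + (c k - c i) * u_(i, j) x * u_(i, k) x
  + (c j - c k) * (u_(i, i) x * u_(j, k) x + u_(i) x * u_(i, j, k) x)
  + (c k - c i) * u_(j) x * u_(i, i, k) x = 0.
Proof. by differentiate i x lin_rel; ring. Qed.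

Lemma lin_rel_dj x : (c i - c j) * (u_(j, k) x * u_(i, j) x + u_(k) x * u_(i, j, j) x)
  + (c k - c i) * (u_(j, j) x * u_(i, k) x + u_(j) x * u_(i, j, k) x)
  + (c j - c k) * u_(i, j) x * u_(j, k) x
  + (c j - c k) * u_(i) x * u_(j, j, k) x = 0.
Proof. by differentiate j x lin_rel; ring. Qed.

Lemma lin_rel_dij x :
    (c i - c j) * (u_(i, j, k) x * u_(i, j) x + u_(j, k) x * u_(i, i, j) x
                   + u_(i, k) x * u_(i, j, j) x)
  + (c k - c i) * (u_(i, j, j) x * u_(i, k) x + u_(j, j) x * u_(i, i, k) x
                   + u_(i, j) x * u_(i, j, k) x + u_(j) x * u_(i, i, j, k) x)
  + (c j - c k) * (u_(i, i, j) x * u_(j, k) x + u_(i, j) x * u_(i, j, k) x)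
  + (c j - c k) * (u_(i, i) x * u_(j, j, k) x + u_(i) x * u_(i, j, j, k) x)
  + (c i - c j) * u_(k) x * u_(i, i, j, j) x = 0.
Proof. by differentiate i x lin_rel_dj; ring. Qed.

Lemma quad_rel_di x : u_(i, i, j, k) x = 2^-1 *
  ((u_(i, i, j) x * u_(i, k) x + u_(i, j) x * u_(i, i, k) x) / u_(i) x
   - u_(i, j) x * u_(i, k) x * u_(i, i) x / u_(i) x ^+ 2
   + (u_(i, i, j) x * u_(j, k) x + u_(i, j) x * u_(i, j, k) x) / u_(j) x
   - u_(i, j) x * u_(j, k) x * u_(i, j) x / u_(j) x ^+ 2
   + (u_(i, i, k) x * u_(j, k) x + u_(i, k) x * u_(i, j, k) x) / u_(k) x
   - u_(i, k) x * u_(j, k) x * u_(i, k) x / u_(k) x ^+ 2).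
Proof. by differentiate i x quad_rel; field_partials. Qed.

Lemma quad_rel_dj x : u_(i, j, j, k) x = 2^-1 *
  ((u_(i, j, j) x * u_(i, k) x + u_(i, j) x * u_(i, j, k) x) / u_(i) x
   - u_(i, j) x * u_(i, k) x * u_(i, j) x / u_(i) x ^+ 2
   + (u_(i, j, j) x * u_(j, k) x + u_(i, j) x * u_(j, j, k) x) / u_(j) x
   - u_(i, j) x * u_(j, k) x * u_(j, j) x / u_(j) x ^+ 2
   + (u_(i, j, k) x * u_(j, k) x + u_(i, k) x * u_(j, j, k) x) / u_(k) x
   - u_(i, k) x * u_(j, k) x * u_(j, k) x / u_(k) x ^+ 2).
Proof. by differentiate j x quad_rel; field_partials. Qed.

End ThirdIndex.

End PlanarEquation.

Theorem lemmaA2 (R : realType) (n : nat) (c : 'I_n -> R) (u : 'rV[R]_n -> R) :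
  (3 <= n)%N ->
  injective c ->
  smooth u ->
  (forall (i : 'I_n) (x : 'rV[R]_n), pd i u x != 0) ->
  (forall (i j k : 'I_n), i != j -> i != k -> j != k -> forall x : 'rV[R]_n,
     (c i - c j) * pd k u x * pds [:: i; j] u x
   + (c k - c i) * pd j u x * pds [:: i; k] u x
   + (c j - c k) * pd i u x * pds [:: j; k] u x = 0) ->
  (forall (i j k : 'I_n), i != j -> i != k -> j != k -> forall x : 'rV[R]_n,
     pds [:: i; j; k] u x =
       2^-1 * (pds [:: i; j] u x * pds [:: i; k] u x / pd i u x
             + pds [:: i; j] u x * pds [:: j; k] u x / pd j u x
             + pds [:: i; k] u x * pds [:: j; k] u x / pd k u x)) ->
  forall (i j : 'I_n), i != j -> forall x : 'rV[R]_n,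
    pd i (fun y => pds [:: i; j] u y ^+ 2 / (pd i u y ^+ 2 * pd j u y)) x
  + pd j (fun y => pds [:: i; j] u y ^+ 2 / (pd i u y * pd j u y ^+ 2)) x
  + pds [:: i; j] (fun y => 2 * pds [:: i; j] u y / (pd i u y * pd j u y)) x
  = 0.
Proof.
move=> n3 c_inj u_smooth u_neq0 lin_rel quad_rel i j ij x.
have [k /andP[ki kj]] := exists_ord_neq2 i j n3.
have ik : i != k by rewrite eq_sym.
have jk : j != k by rewrite eq_sym.
have [cij cjk cki] : [/\ c i != c j, c j != c k & c k != c i].
  by rewrite !(inj_eq c_inj) ij jk ki.
have lin := lin_rel i j k ij ik jk.
have quad := quad_rel i j k ij ik jk.
rewrite (planar_lhsE i j u_smooth u_neq0 x).
rewrite (planar_identity (u_neq0 i x) (u_neq0 j x) (u_neq0 k x) cij cjk cki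
  (lin x) (quad x) (lin_rel_di u_smooth u_neq0 lin x) (lin_rel_dj u_smooth u_neq0 lin x)
  (lin_rel_dij u_smooth u_neq0 lin x) (quad_rel_di u_smooth u_neq0 quad x)
  (quad_rel_dj u_smooth u_neq0 quad x)).
by rewrite subrr mulr0.
Qed.
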